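(* With $f$ as defined in the context, for $b,c\in(-1,\infty)$ the quantity $f(b,c)$ is strictly decreasing in $b$ (for fixed $c$) and strictly increasing in $c$ (for fixed $b$).
   Context: Let $u_n=(-1)^{s_2(n)}$, where $s_2(n)$ is the sum of the binary digits of the non-negative integer $n$ (Thue–Morse sequence with values $\pm1$). For $b,c\in(-1,\infty)$ define $f(b,c)=\prod_{n=1}^\infty\left(\frac{n+b}{n+c}\right)^{u_n}$ (limit of partial products; it converges). *)

From Stdlib Require Import Reals Lra Lia.
From Coquelicot Require Import Coquelicot.
Open Scope R_scope.

Fixpoint s2_aux (fuel n : nat) : nat :=
  match fuel with
  | O => O
  | S f => match n with
           | O => O
           | _ => (Nat.modulo n 2 + s2_aux f (Nat.div n 2))%nat
           end
  end.
Definition s2 (n : nat) : nat := s2_aux n n.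

(* Thue--Morse sequence with values +-1: u_n = (-1)^{s_2(n)} *)
Definition u (n : nat) : R := (-1) ^ (s2 n).

(* factor ((n+b)/(n+c))^{u_n}, u_n = +-1 *)
Definition tm_factor (b c : R) (n : nat) : R :=
  if Nat.even (s2 n) then (INR n + b) / (INR n + c)
  else (INR n + c) / (INR n + b).

Fixpoint tm_partial (b c : R) (N : nat) : R :=
  match N with
  | O => 1
  | S m => tm_partial b c m * tm_factor b c (S m)
  end.

Definition tm_f (b c : R) : R := real (Lim_seq (tm_partial b c)).

(* Taking logarithms, f(b,c) = exp L(b,c) with L(b,c) = sum_{n>=1} u_n (ln(n+b) - ln(n+c)).
   The series converges: the terms n = 2k+2 and n = 2k+3 carry opposite signs, so pairing them
   leaves terms of size O(1/k^2).  Since L(a,b) + L(b,c) = L(a,c), both monotonicity claims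
   reduce to L(b,a) < 0 for a < b.  Over a dyadic block the Thue--Morse signs turn a sum into an
   iterated difference, sum_{i<2^K} u_i g(x+i) = D_1 D_2 ... D_{2^(K-1)} g(x) with
   D_h g(x) = g(x) - g(x+h); hence the partial sum up to 2^(K+1)-1 is the one up to 2^K-1 minus
   such a difference of phi(x) = ln(x+b) - ln(x+a).  As phi' = 1/(x+b) - 1/(x+a) and 1/y is
   completely monotone, all these differences are positive, so L(b,a) <= -phi(1), that is
   f(b,a) <= (1+a)/(1+b) < 1. *)

From Stdlib Require Import Reals Lra Lia.
From Coquelicot Require Import Coquelicot.
Open Scope R_scope.

Lemma INR_pow2 K : INR (2 ^ K) = 2 ^ K.
Proof. rewrite pow_INR; f_equal; simpl; ring. Qed.

Lemma INR_double n : INR (2 * n) = 2 * INR n.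
Proof. rewrite mult_INR; f_equal; simpl; ring. Qed.

Lemma decr_function_pinfty f df al :
  (forall x, al < x -> is_derive f x (df x)) -> (forall x, al < x -> df x < 0) ->
  forall x y, al < x -> x < y -> f y < f x.
Proof.
  intros Hf Hdf x y Hx Hxy; apply Ropp_lt_cancel.
  apply (incr_function (fun z => - f z) al p_infty (fun z => - df z)); simpl; auto.
  - intros z Hz _; exact (is_derive_opp f z (df z) (Hf z Hz)).
  - intros z Hz _; specialize (Hdf z Hz); lra.
Qed.

Lemma ln_sub_abs_le p q m : 0 < m -> m <= p -> m <= q ->
  Rabs (ln p - ln q) <= Rabs (p - q) / m.
Proof.
  intros Hm Hp Hq.
  assert (Hmin : m <= Rmin q p) by (apply Rmin_glb; lra).
  destruct (MVT_abs ln Rinv q p) as [c [E Hc]].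
  { intros c Hc; apply derivable_pt_lim_ln; lra. }
  rewrite E, Rabs_inv, (Rabs_pos_eq c) by lra.
  unfold Rdiv; rewrite Rmult_comm; apply Rmult_le_compat_l; [apply Rabs_pos|].
  apply Rinv_le_contravar; lra.
Qed.

Lemma ex_lim_seq_of_increments (W g : nat -> R) :
  (forall k, 0 <= g k) -> (forall k, Rabs (W (S k) - W k) <= g k - g (S k)) ->
  exists l : R, is_lim_seq W l.
Proof.
  intros Hg HW.
  assert (Hlow : forall k, W 0%nat - g 0%nat <= W k - g k).
  { induction k as [|k IH]; [lra|]; specialize (HW k); apply Rabs_le_between in HW; lra. }
  destruct (ex_finite_lim_seq_decr (fun k => W k + g k) (W 0%nat - g 0%nat)) as [lWg HWg].
  { intro k; specialize (HW k); apply Rabs_le_between in HW; lra. }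
  { intro k; specialize (Hlow k); specialize (Hg k); lra. }
  destruct (ex_finite_lim_seq_decr g 0) as [lg Hlg]; [|exact Hg|].
  { intro k; specialize (HW k); pose proof (Rabs_pos (W (S k) - W k)); lra. }
  exists (lWg - lg).
  apply (is_lim_seq_ext (fun k => W k + g k - g k)); [intro; ring|].
  now apply is_lim_seq_minus'.
Qed.

Lemma is_lim_seq_odd_even (v : nat -> R) (l : R) :
  is_lim_seq (fun k => v (2 * k + 1)%nat) l -> is_lim_seq (fun k => v (2 * k + 2)%nat) l ->
  is_lim_seq v l.
Proof.
  intros Hodd Heven; apply is_lim_seq_spec in Hodd, Heven; apply is_lim_seq_spec.
  intro e; destruct (Hodd e) as [N1 HN1], (Heven e) as [N2 HN2].
  exists (2 * (N1 + N2) + 2)%nat; intros n Hn.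
  destruct (Nat.Even_or_Odd n) as [[k Hk]|[k Hk]]; subst n.
  - replace (2 * k)%nat with (2 * (k - 1) + 2)%nat by lia; apply HN2; lia.
  - apply HN1; lia.
Qed.

Lemma is_lim_seq_div_INR_S A : is_lim_seq (fun k => A / INR (S k)) 0.
Proof.
  apply (is_lim_seq_incr_1 (fun n => A / INR n)).
  replace (Finite 0) with (Rbar_mult A (Rbar_inv p_infty)) by (simpl; f_equal; ring).
  apply is_lim_seq_scal_l, is_lim_seq_inv; [apply is_lim_seq_INR | discriminate].
Qed.

Fixpoint dyadic_diff (K : nat) (g : R -> R) (x : R) : R :=
  match K with
  | O => g x
  | S k => dyadic_diff k g x - dyadic_diff k g (x + 2 ^ k)
  end.

Lemma dyadic_diff_scal K g k x :
  dyadic_diff K (fun y => k * g y) x = k * dyadic_diff K g x.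
Proof. revert x; induction K as [|K IH]; intro x; cbn; rewrite ?IH; ring. Qed.

Lemma dyadic_diff_minus K g h x :
  dyadic_diff K (fun y => g y - h y) x = dyadic_diff K g x - dyadic_diff K h x.
Proof. revert x; induction K as [|K IH]; intro x; cbn; rewrite ?IH; ring. Qed.

Lemma dyadic_diff_shift K g s x :
  dyadic_diff K (fun y => g (y + s)) x = dyadic_diff K g (x + s).
Proof.
  revert x; induction K as [|K IH]; intro x; cbn; [reflexivity|].
  rewrite !IH; do 2 f_equal; ring.
Qed.

Lemma dyadic_diff_derive K g g' al :
  (forall y, al < y -> is_derive g y (g' y)) ->
  forall x, al < x -> is_derive (dyadic_diff K g) x (dyadic_diff K g' x).
Proof.
  intro Hg; induction K as [|K IH]; intros x Hx; cbn; [now apply Hg|].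
  assert (H2K : 0 < 2 ^ K) by (apply pow_lt; lra).
  apply (is_derive_minus _ (fun y => dyadic_diff K g (y + 2 ^ K))); [now apply IH|].
  rewrite <- (scal_one (dyadic_diff K g' (x + 2 ^ K))).
  apply (is_derive_comp (dyadic_diff K g) (fun y => y + 2 ^ K)); [apply IH; lra|].
  auto_derive; auto; ring.
Qed.

Definition inv_pow (m : nat) (y : R) : R := / y ^ S m.

Lemma inv_pow_derive m y : 0 < y -> is_derive (inv_pow m) y (- INR (S m) * inv_pow (S m) y).
Proof.
  intro Hy; unfold inv_pow.
  assert (Hm : y ^ m <> 0) by (apply pow_nonzero; lra).
  auto_derive.
  - simpl; apply Rmult_integral_contrapositive_currified; lra.
  - change (match m with 0%nat => 1 | S _ => INR m + 1 end) with (INR (S m)).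
    simpl; field; lra.
Qed.

Lemma dyadic_diff_inv_pow_decr_of_pos K :
  (forall m y, 0 < y -> 0 < dyadic_diff K (inv_pow m) y) ->
  forall m y1 y2, 0 < y1 -> y1 < y2 ->
  dyadic_diff K (inv_pow m) y2 < dyadic_diff K (inv_pow m) y1.
Proof.
  intros Hpos m.
  apply (decr_function_pinfty _ (dyadic_diff K (fun y => - INR (S m) * inv_pow (S m) y)) 0).
  - apply dyadic_diff_derive; intros y Hy; now apply inv_pow_derive.
  - intros y Hy; rewrite dyadic_diff_scal.
    specialize (Hpos (S m) y Hy); pose proof (lt_0_INR (S m) ltac:(lia)); nra.
Qed.

Lemma dyadic_diff_inv_pow_pos K m y : 0 < y -> 0 < dyadic_diff K (inv_pow m) y.
Proof.
  revert m y; induction K as [|K IH]; intros m y Hy; cbn.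
  - apply Rinv_0_lt_compat, pow_lt, Hy.
  - assert (H2K : 0 < 2 ^ K) by (apply pow_lt; lra).
    pose proof (dyadic_diff_inv_pow_decr_of_pos K IH m y (y + 2 ^ K) Hy ltac:(lra)); lra.
Qed.

Definition log_ratio (b c x : R) : R := ln (x + b) - ln (x + c).

Lemma log_ratio_derive b a x : 0 < x + a -> 0 < x + b ->
  is_derive (log_ratio b a) x (inv_pow 0 (x + b) - inv_pow 0 (x + a)).
Proof. intros Ha Hb; unfold log_ratio, inv_pow; auto_derive; [lra | simpl; field; lra]. Qed.

Lemma dyadic_diff_log_ratio_pos a b K x : a < b -> 0 < x + a ->
  0 < dyadic_diff K (log_ratio b a) x.
Proof.
  intros Hab Hx; destruct K as [|K]; cbn.
  - unfold log_ratio; pose proof (ln_increasing (x + a) (x + b) Hx ltac:(lra)); lra.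
  - assert (H2K : 0 < 2 ^ K) by (apply pow_lt; lra).
    enough (dyadic_diff K (log_ratio b a) (x + 2 ^ K) < dyadic_diff K (log_ratio b a) x) by lra.
    apply (decr_function_pinfty _
      (fun y => dyadic_diff K (fun z => inv_pow 0 (z + b) - inv_pow 0 (z + a)) y) (- a));
      try lra.
    + apply dyadic_diff_derive; intros y Hy; apply log_ratio_derive; lra.
    + intros y Hy; rewrite dyadic_diff_minus, !dyadic_diff_shift.
      apply Rlt_minus, dyadic_diff_inv_pow_decr_of_pos; [apply dyadic_diff_inv_pow_pos | lra | lra].
Qed.

Lemma s2_aux_fuel_irrel f1 f2 n :
  (n <= f1)%nat -> (n <= f2)%nat -> s2_aux f1 n = s2_aux f2 n.
Proof.
  revert f2 n; induction f1 as [|f1 IH]; intros [|f2] [|n] H1 H2; try lia; try reflexivity.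
  cbn [s2_aux]; f_equal.
  assert (Hdiv : (S n / 2 < S n)%nat) by (apply Nat.div_lt; lia).
  apply IH; lia.
Qed.

Lemma s2_rec n : (0 < n)%nat -> s2 n = (n mod 2 + s2 (n / 2))%nat.
Proof.
  destruct n as [|n]; intro Hn; [lia|].
  unfold s2 at 1; cbn [s2_aux]; f_equal.
  assert (Hdiv : (S n / 2 < S n)%nat) by (apply Nat.div_lt; lia).
  apply s2_aux_fuel_irrel; lia.
Qed.

Lemma s2_double_add m r : (r < 2)%nat -> s2 (2 * m + r) = (s2 m + r)%nat.
Proof.
  intro Hr.
  destruct (Nat.eq_dec (2 * m + r) 0) as [E|E].
  - replace m with 0%nat by lia; replace r with 0%nat by lia; reflexivity.
  - rewrite s2_rec by lia.
    replace (2 * m + r)%nat with (r + m * 2)%nat by lia.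
    rewrite Nat.div_add, Nat.Div0.mod_add, Nat.div_small, Nat.mod_small by lia.
    simpl; lia.
Qed.

Definition tm_sign (n : nat) : R := if Nat.even (s2 n) then 1 else -1.

Lemma tm_sign_double m : tm_sign (2 * m) = tm_sign m.
Proof.
  unfold tm_sign; rewrite <- (Nat.add_0_r (2 * m)), s2_double_add, Nat.add_0_r by lia.
  reflexivity.
Qed.

Lemma tm_sign_double_add1 m : tm_sign (2 * m + 1) = - tm_sign m.
Proof.
  unfold tm_sign; rewrite s2_double_add, Nat.add_1_r, Nat.even_succ, <- Nat.negb_even by lia.
  destruct (Nat.even (s2 m)); simpl; ring.
Qed.

Lemma tm_sign_add_pow2 K n : (n < 2 ^ K)%nat -> tm_sign (n + 2 ^ K) = - tm_sign n.
Proof.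
  revert n; induction K as [|K IH]; intros n Hn.
  - simpl in Hn; replace n with 0%nat by lia.
    exact (tm_sign_double_add1 0).
  - rewrite (Nat.div_mod_eq n 2) in *.
    pose proof (Nat.mod_upper_bound n 2 ltac:(lia)) as Hr.
    rewrite Nat.pow_succ_r' in *.
    replace (2 * (n / 2) + n mod 2 + 2 * 2 ^ K)%nat
      with (2 * (n / 2 + 2 ^ K) + n mod 2)%nat by lia.
    assert (Hm : (n / 2 < 2 ^ K)%nat) by lia.
    destruct (n mod 2) as [|[|r]]; try lia.
    + rewrite !Nat.add_0_r, !tm_sign_double; apply IH; lia.
    + rewrite !tm_sign_double_add1, IH by lia; reflexivity.
Qed.

Lemma Rabs_tm_sign_mul n x : Rabs (tm_sign n * x) = Rabs x.
Proof.
  unfold tm_sign; rewrite Rabs_mult.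
  destruct (Nat.even (s2 n)); [rewrite Rabs_R1 | rewrite (Rabs_left (-1)) by lra]; ring.
Qed.

Fixpoint tm_sum (g : R -> R) (j : nat) (x : R) : R :=
  match j with
  | O => 0
  | S i => tm_sum g i x + tm_sign i * g (x + INR i)
  end.

Lemma tm_sum_add_pow2 g K x j : (j <= 2 ^ K)%nat ->
  tm_sum g (2 ^ K + j) x = tm_sum g (2 ^ K) x - tm_sum g j (x + 2 ^ K).
Proof.
  induction j as [|j IH]; intro Hj.
  - rewrite Nat.add_0_r; simpl; ring.
  - rewrite Nat.add_succ_r; cbn [tm_sum]; rewrite IH by lia.
    rewrite (Nat.add_comm (2 ^ K) j), tm_sign_add_pow2, plus_INR, INR_pow2 by lia.
    replace (x + (INR j + 2 ^ K)) with (x + 2 ^ K + INR j) by ring.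
    ring.
Qed.

Lemma tm_sum_pow2 g K x : tm_sum g (2 ^ K) x = dyadic_diff K g x.
Proof.
  revert x; induction K as [|K IH]; intro x.
  - cbn; rewrite Rplus_0_r; unfold tm_sign; simpl; ring.
  - replace (2 ^ S K)%nat with (2 ^ K + 2 ^ K)%nat by (rewrite Nat.pow_succ_r'; lia).
    rewrite tm_sum_add_pow2, !IH by lia.
    reflexivity.
Qed.

Fixpoint log_partial (b c : R) (N : nat) : R :=
  match N with
  | O => 0
  | S m => log_partial b c m + tm_sign (S m) * log_ratio b c (INR (S m))
  end.

Lemma tm_partial_exp b c N : -1 < b -> -1 < c -> tm_partial b c N = exp (log_partial b c N).
Proof.
  intros Hb Hc; induction N as [|N IH]; cbn [tm_partial log_partial].
  - now rewrite exp_0.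
  - rewrite IH, exp_plus; f_equal.
    assert (HN : 1 <= INR (S N)) by (apply (le_INR 1); lia).
    unfold tm_factor, tm_sign, log_ratio; set (x := INR (S N)) in *.
    destruct (Nat.even (s2 (S N))).
    + now rewrite Rmult_1_l, <- ln_div, exp_ln by (try apply Rdiv_lt_0_compat; lra).
    + replace (-1 * (ln (x + b) - ln (x + c))) with (ln (x + c) - ln (x + b)) by ring.
      now rewrite <- ln_div, exp_ln by (try apply Rdiv_lt_0_compat; lra).
Qed.

Lemma log_partial_cocycle a b c N :
  log_partial a b N + log_partial b c N = log_partial a c N.
Proof.
  induction N as [|N IH]; cbn [log_partial]; [ring|].
  rewrite <- IH; unfold log_ratio; ring.
Qed.

(* The term n = 0 is added and removed again; its value, possibly a junk logarithm, cancels. *)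
Lemma log_partial_tm_sum b c N :
  log_partial b c N = tm_sum (log_ratio b c) (S N) 0 - log_ratio b c 0.
Proof.
  induction N as [|N IH].
  - cbn; rewrite Rplus_0_r; unfold tm_sign; simpl; ring.
  - cbn [log_partial]; rewrite IH; cbn [tm_sum]; rewrite (Rplus_0_l (INR (S N))); ring.
Qed.

Lemma log_partial_pow2_pred b c K :
  log_partial b c (2 ^ S K - 1) =
  log_partial b c (2 ^ K - 1) - dyadic_diff K (log_ratio b c) (2 ^ K).
Proof.
  pose proof (Nat.pow_nonzero 2 K ltac:(lia)).
  rewrite !log_partial_tm_sum, <- !Nat.sub_succ_l, !Nat.sub_succ, !Nat.sub_0_r by
    (try rewrite Nat.pow_succ_r'; lia).
  replace (2 ^ S K)%nat with (2 ^ K + 2 ^ K)%nat by (rewrite Nat.pow_succ_r'; lia).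
  rewrite tm_sum_add_pow2, !tm_sum_pow2, Rplus_0_l by lia.
  ring.
Qed.

Lemma log_partial_pow2_pred_le a b K : -1 < a -> a < b ->
  log_partial b a (2 ^ S K - 1) <= - log_ratio b a 1.
Proof.
  intros Ha Hab; induction K as [|K IH].
  - change (2 ^ 1 - 1)%nat with 1%nat; cbn [log_partial]; rewrite INR_1.
    unfold tm_sign; simpl; lra.
  - rewrite log_partial_pow2_pred.
    assert (H1 : 1 <= 2 ^ S K) by (apply pow_R1_Rle; lra).
    pose proof (dyadic_diff_log_ratio_pos a b (S K) (2 ^ S K) Hab ltac:(lra)); lra.
Qed.

Lemma log_partial_odd_step b c k : -1 < b -> -1 < c ->
  Rabs (log_partial b c (2 * S k + 1) - log_partial b c (2 * k + 1)) <=
  Rabs (b - c) / INR (S k) - Rabs (b - c) / INR (S (S k)).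
Proof.
  intros Hb Hc.
  replace (2 * S k + 1)%nat with (S (S (2 * k + 1))) by lia; cbn [log_partial].
  replace (S (2 * k + 1)) with (2 * S k)%nat by lia.
  replace (S (2 * S k)) with (2 * S k + 1)%nat by lia.
  rewrite tm_sign_double, tm_sign_double_add1, plus_INR, INR_1.
  assert (Hx : INR (2 * S k) = 2 * INR k + 2) by (rewrite INR_double, S_INR; ring).
  set (x := INR (2 * S k)) in *.
  rewrite !S_INR; pose proof (pos_INR k).
  match goal with |- Rabs ?e <= _ =>
    replace e with (tm_sign (S k) * (log_ratio b c x - log_ratio b c (x + 1))) by ring end.
  rewrite Rabs_tm_sign_mul; unfold log_ratio.
  replace (ln (x + b) - ln (x + c) - (ln (x + 1 + b) - ln (x + 1 + c)))
    with (ln ((x + b) * (x + 1 + c)) - ln ((x + c) * (x + 1 + b)))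
    by (rewrite !ln_mult by lra; ring).
  eapply Rle_trans;
    [apply (ln_sub_abs_le _ _ ((INR k + 1) * (INR k + 1 + 1)));
     [nra | apply Rmult_le_compat; lra | apply Rmult_le_compat; lra] |].
  replace ((x + b) * (x + 1 + c) - (x + c) * (x + 1 + b)) with (b - c) by ring.
  apply Req_le; field; lra.
Qed.

Lemma log_partial_even_step b c k : -1 < b -> -1 < c ->
  Rabs (log_partial b c (2 * k + 2) - log_partial b c (2 * k + 1)) <= Rabs (b - c) / INR (S k).
Proof.
  intros Hb Hc.
  replace (2 * k + 2)%nat with (S (2 * k + 1)) by lia; cbn [log_partial].
  replace (S (2 * k + 1)) with (2 * S k)%nat by lia.
  rewrite INR_double, S_INR; pose proof (pos_INR k).
  match goal with |- Rabs ?e <= _ =>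
    replace e with (tm_sign (2 * S k) * log_ratio b c (2 * (INR k + 1))) by ring end.
  rewrite Rabs_tm_sign_mul; unfold log_ratio.
  eapply Rle_trans; [apply (ln_sub_abs_le _ _ (INR k + 1)); lra|].
  replace (2 * (INR k + 1) + b - (2 * (INR k + 1) + c)) with (b - c) by ring.
  apply Rle_refl.
Qed.

Lemma log_partial_cvg b c : -1 < b -> -1 < c -> exists l : R, is_lim_seq (log_partial b c) l.
Proof.
  intros Hb Hc.
  set (g := fun k => Rabs (b - c) / INR (S k)).
  destruct (ex_lim_seq_of_increments (fun k => log_partial b c (2 * k + 1)) g) as [l Hodd].
  - intro k; apply Rdiv_le_0_compat; [apply Rabs_pos | apply lt_0_INR; lia].
  - intro k; now apply log_partial_odd_step.
  - exists l; apply is_lim_seq_odd_even; [exact Hodd|].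
    apply (is_lim_seq_ext (fun k => log_partial b c (2 * k + 1) +
      (log_partial b c (2 * k + 2) - log_partial b c (2 * k + 1)))); [intro; ring|].
    rewrite <- (Rplus_0_r l); apply is_lim_seq_plus'; [exact Hodd|].
    apply is_lim_seq_abs_0, (is_lim_seq_le_le (fun _ => 0) _ g).
    + intro k; split; [apply Rabs_pos | now apply log_partial_even_step].
    + apply is_lim_seq_const.
    + apply is_lim_seq_div_INR_S.
Qed.

Lemma tm_f_exp b c (l : R) :
  -1 < b -> -1 < c -> is_lim_seq (log_partial b c) l -> tm_f b c = exp l.
Proof.
  intros Hb Hc Hl; unfold tm_f.
  rewrite (is_lim_seq_unique _ (exp l)); [reflexivity|].
  apply (is_lim_seq_ext (fun N => exp (log_partial b c N))).
  - intro N; symmetry; now apply tm_partial_exp.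
  - apply is_lim_seq_continuous; [|exact Hl].
    apply derivable_continuous_pt, derivable_pt_exp.
Qed.

Lemma tm_f_pos b c : -1 < b -> -1 < c -> 0 < tm_f b c.
Proof.
  intros Hb Hc; destruct (log_partial_cvg b c Hb Hc) as [l Hl].
  rewrite (tm_f_exp b c l Hb Hc Hl); apply exp_pos.
Qed.

Lemma tm_f_mul a b c : -1 < a -> -1 < b -> -1 < c -> tm_f a b * tm_f b c = tm_f a c.
Proof.
  intros Ha Hb Hc.
  destruct (log_partial_cvg a b Ha Hb) as [lab Hab].
  destruct (log_partial_cvg b c Hb Hc) as [lbc Hbc].
  rewrite (tm_f_exp a b lab), (tm_f_exp b c lbc), <- exp_plus by assumption.
  symmetry; apply tm_f_exp; [exact Ha | exact Hc|].
  apply (is_lim_seq_ext (fun N => log_partial a b N + log_partial b c N)).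
  - intro N; apply log_partial_cocycle.
  - now apply is_lim_seq_plus'.
Qed.

Lemma tm_f_le a b : -1 < a -> a < b -> tm_f b a <= (1 + a) / (1 + b).
Proof.
  intros Ha Hab; destruct (log_partial_cvg b a ltac:(lra) Ha) as [l Hl].
  rewrite (tm_f_exp b a l) by (assumption || lra).
  assert (Hsub : is_lim_seq (fun K => log_partial b a (2 ^ S K - 1)) l).
  { apply (is_lim_seq_subseq (log_partial b a) l); [|exact Hl].
    apply eventually_subseq; intro K.
    pose proof (Nat.pow_nonzero 2 (S K) ltac:(lia)); rewrite (Nat.pow_succ_r' 2 (S K)); lia. }
  assert (Hle := is_lim_seq_le _ _ _ _ (fun K => log_partial_pow2_pred_le a b K Ha Hab)
                   Hsub (is_lim_seq_const (- log_ratio b a 1))).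
  simpl in Hle.
  replace ((1 + a) / (1 + b)) with (exp (- log_ratio b a 1)).
  - destruct (Rle_lt_or_eq l _ Hle) as [Hlt | ->];
      [apply Rlt_le, exp_increasing, Hlt | apply Rle_refl].
  - unfold log_ratio; rewrite Ropp_minus_distr, <- ln_div, exp_ln
      by (try apply Rdiv_lt_0_compat; lra).
    reflexivity.
Qed.

Lemma tm_f_lt_1 a b : -1 < a -> a < b -> tm_f b a < 1.
Proof.
  intros Ha Hab; eapply Rle_lt_trans; [now apply tm_f_le|].
  apply (Rdiv_lt_1 (1 + a) (1 + b)); lra.
Qed.

Theorem theorem2 :
  (forall b1 b2 c : R, -1 < b1 -> b1 < b2 -> -1 < c -> tm_f b2 c < tm_f b1 c) /\
  (forall b c1 c2 : R, -1 < b -> -1 < c1 -> c1 < c2 -> tm_f b c1 < tm_f b c2).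
Proof.
  split.
  - intros b1 b2 c Hb1 H12 Hc.
    rewrite <- (tm_f_mul b2 b1 c) by lra.
    pose proof (Rmult_lt_compat_r _ _ _ (tm_f_pos b1 c Hb1 Hc) (tm_f_lt_1 b1 b2 Hb1 H12)).
    lra.
  - intros b c1 c2 Hb Hc1 H12.
    rewrite <- (tm_f_mul b c2 c1) by lra.
    pose proof (Rmult_lt_compat_l _ _ _ (tm_f_pos b c2 Hb ltac:(lra)) (tm_f_lt_1 c1 c2 Hc1 H12)).
    lra.
Qed.
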